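(* Let $V$ be a finite dimensional real or complex vector space with $\dim V=n$, let $B:V\to V$ be an invertible linear map, let $v_1,\dots,v_k\in V$ and $p_1,\dots,p_k\in V^*$, and let $$B'=B+\sum_{i=1}^{k}v_i\otimes p_i .$$ Put $u_i=B^{-1}v_i$ for $i=1,\dots,k$ and $A=\mathrm{id}_V+\sum_{i=1}^{k}u_i\otimes p_i$. If $\det A\neq 0$, then $B'$ is invertible and $$(B')^{-1}=\frac{1}{\det A}B^{-1}+\frac{1}{\det A}\left(\sum_{i=1}^{\min(n-1,k)}\ \sum_{1\le j_1<\dots<j_i\le k}(u_{j_1},p_{j_1})\,\square\,\cdots\,\square\,(u_{j_i},p_{j_i})\right)B^{-1}.$$
   Context: For $v\in V$ and $p\in V^*$, $v\otimes p$ denotes the linear map $V\to V$, $x\mapsto p(x)\,v$. For covectors $q_1,\dots,q_m\in V^*$ and vectors $w_1,\dots,w_m\in V$, $(q_1\wedge\dots\wedge q_m)(w_1,\dots,w_m)=\det\bigl[q_a(w_b)\bigr]_{a,b=1}^{m}$. For $\dim V=n\ge 2$, $1\le i\le n-1$, vectors $z_1,\dots,z_i\in V$ and covectors $p_1,\dots,p_i\in V^*$, the operator $(z_1,p_1)\,\square\,\cdots\,\square\,(z_i,p_i):V\to V$ is the unique linear map $T$ such that $q(Tv)=(q\wedge p_1\wedge\dots\wedge p_i)(v,z_1,\dots,z_i)$ for all $v\in V$, $q\in V^*$. Empty sums are zero. *)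

From HB Require Import structures.
From mathcomp Require Import all_boot all_order all_algebra.
From mathcomp Require Import reals complex.
Set Implicit Arguments. Unset Strict Implicit. Unset Printing Implicit Defensive.
Import GRing.Theory.
Local Open Scope ring_scope.

(* V = 'cV[F]_n (column vectors), V^* = 'rV[F]_n (row vectors, acting by *m),
   linear maps V -> V = 'M[F]_n acting by left multiplication.
   v (x) p : x |-> p(x) v  is the matrix  v *m p. *)
Definition tens (F : fieldType) (n : nat) (v : 'cV[F]_n) (p : 'rV[F]_n) : 'M[F]_n :=
  v *m p.

(* (q_1 /\ ... /\ q_m)(w_1,...,w_m) = det [q_a(w_b)]_{a,b}, with the families
   given as sequences of length m. *)
Definition wedge_eval (F : fieldType) (n m : nat)
    (qs : seq 'rV[F]_n) (ws : seq 'cV[F]_n) : F :=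
  \det (\matrix_(a < m, b < m) (nth 0 qs a *m nth 0 ws b) 0 0).

(* (z_1,p_1) [] ... [] (z_i,p_i), for s = [:: (z_1,p_1); ...; (z_i,p_i)]:
   the unique linear T with q(Tv) = (q /\ p_1 /\ ... /\ p_i)(v, z_1, ..., z_i).
   Its matrix entry (r,c) is e_r^*(T e_c). *)
Definition box (F : fieldType) (n : nat) (s : seq ('cV[F]_n * 'rV[F]_n)) : 'M[F]_n :=
  \matrix_(r < n, c < n)
    wedge_eval (size s).+1 (delta_mx 0 r :: map snd s) (delta_mx c 0 :: map fst s).

Definition SM_formula (F : fieldType) : Prop :=
  forall (n k : nat) (B : 'M[F]_n) (v : 'I_k -> 'cV[F]_n) (p : 'I_k -> 'rV[F]_n),
  B \in unitmx ->
  let B' := B + \sum_(i < k) tens (v i) (p i) in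
  let u := fun i => invmx B *m v i in
  let A := 1%:M + \sum_(i < k) tens (u i) (p i) in
  \det A != 0 ->
  B' \in unitmx /\
  invmx B' = (\det A)^-1 *: invmx B
    + (\det A)^-1 *:
      ((\sum_(1 <= i < (minn (n - 1) k).+1)
          \sum_(S : {set 'I_k} | #|S| == i)
            box [seq (u j, p j) | j <- enum S]) *m invmx B).

Set Warnings "-notation-overridden -ambiguous-paths".
From mathcomp Require Import all_boot all_order all_algebra.
From mathcomp Require Import reals complex.
Set Implicit Arguments. Unset Strict Implicit. Unset Printing Implicit Defensive.
Import GRing.Theory.
Local Open Scope ring_scope.

(* Write U = [u_1 ... u_k], P = [p_1; ...; p_k] and D = 1 + P U,
   so that A = 1 + U P and B' = B A.  The (r,c) entry of the identity plus the
   sum of boxes is the sum, over all S in {1..k}, of the principal minors through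
   the first row and column of the bordered Gram matrix
       G(r,c) = [ e_r^*(e_c)   e_r^*(u_j) ]
                [ p_i(e_c)     p_i(u_j)   ],
   i.e. (by multilinearity along the diagonal) det (G(r,c) + diag(0,1,...,1));
   boxes with |S| >= n vanish as Gram determinants of more than n covectors.
   A Schur complement with respect to D evaluates that determinant as
   det D * (1 - U D^-1 P)_rc.  Finally det D = det A (Sylvester) and
   1 - U D^-1 P = A^-1 (Woodbury). *)

Lemma det_add_delta (F : fieldType) m (A : 'M[F]_m) i :
  \det (A + delta_mx i i) = \det A + cofactor A i i.
Proof.
have cofE j : cofactor (A + delta_mx i i) i j = cofactor A i j.
  rewrite /cofactor; congr (_ * \det _); apply/matrixP => a b.
  by rewrite !mxE eq_sym (negPf (neq_lift i a)) addr0.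
rewrite !(expand_det_row _ i); under eq_bigr do rewrite cofE !mxE mulrDl.
rewrite big_split /= -expand_det_row (bigD1 i) //= big1 ?addr0 => [|j /negPf nji].
  by rewrite !eqxx mul1r.
by rewrite nji andbF mul0r.
Qed.

Lemma copid_mxE (R : pzRingType) m r (i j : 'I_m) :
  copid_mx r i j = ((i == j) && (r <= i)%N)%:R :> R.
Proof.
rewrite !mxE (inj_eq val_inj) ltnNge.
by case: (i == j) (r <= i)%N => [] []; rewrite /= ?subr0 ?subrr.
Qed.

Lemma nth_cat_bump (T : Type) (x0 : T) (xs ys : seq T) y i :
  nth x0 (xs ++ y :: ys) (bump (size xs) i) = nth x0 (xs ++ ys) i.
Proof.
rewrite !nth_cat /bump; case: (leqP (size xs) i) => h.
  by rewrite add1n ltnNge (leq_trans h (leqnSn i)) /= subSn.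
by rewrite add0n h.
Qed.

Lemma big_subset_setU1 (T : finType) (V : nmodType) (x : T) (A : {set T})
    (G : {set T} -> V) : x \notin A ->
  \sum_(S : {set T} | S \subset x |: A) G S =
  \sum_(S : {set T} | S \subset A) G S + \sum_(S : {set T} | S \subset A) G (x |: S).
Proof.
move=> xA; rewrite (bigID (fun S : {set T} => x \in S)) /= addrC; congr (_ + _).
  by apply: eq_bigl => S; rewrite -subsetD1 setU1K.
rewrite (reindex_onto (fun S => x |: S) (fun S => S :\ x)) /=; last first.
  by move=> S /andP[_ xS]; rewrite setD1K.
apply: eq_bigl => S; rewrite setU11 andbT.
apply/andP/idP => [[sxSxA /eqP <-] | sSA].
  by rewrite -(setU1K xA) setSD.
have xS : x \notin S by apply: contra xA => /(subsetP sSA).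
by rewrite setUS // setU1K.
Qed.

Lemma det_block_mx_schur (F : fieldType) m1 m2 (A : 'M[F]_m1) (B : 'M_(m1, m2))
    (C : 'M_(m2, m1)) (D : 'M_m2) :
  D \in unitmx -> \det (block_mx A B C D) = \det (A - B *m invmx D *m C) * \det D.
Proof.
move=> uD; have -> : block_mx A B C D =
    block_mx (A - B *m invmx D *m C) (B *m invmx D) 0 1%:M *m block_mx 1%:M 0 C D.
  rewrite mulmx_block mulmx1 mulmx0 !mul0mx !mul1mx !add0r subrK.
  by rewrite -mulmxA mulVmx ?mulmx1.
by rewrite det_mulmx det_ublock det_lblock !det1 mulr1 mul1r.
Qed.

Lemma det_sylvester (F : comPzRingType) m k (U : 'M[F]_(m, k)) (P : 'M[F]_(k, m)) :
  \det (1%:M + P *m U) = \det (1%:M + U *m P).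
Proof.
have e1 : block_mx (1%:M : 'M_m) (- U) P (1%:M : 'M_k) =
   block_mx 1%:M 0 P 1%:M *m block_mx 1%:M (- U) 0 (1%:M + P *m U).
  rewrite mulmx_block ?mul1mx ?mulmx1 ?mul0mx ?mulmx0 ?addr0 ?add0r.
  by rewrite mulmxN addrCA addNr addr0.
have e2 : block_mx (1%:M : 'M_m) (- U) P (1%:M : 'M_k) =
   block_mx (1%:M + U *m P) (- U) 0 1%:M *m block_mx 1%:M 0 P 1%:M.
  rewrite mulmx_block ?mul1mx ?mulmx1 ?mul0mx ?mulmx0 ?addr0 ?add0r mulNmx.
  by rewrite addrK.
have := congr1 determinant (etrans (esym e1) e2).
by rewrite !det_mulmx !det_ublock !det_lblock !det1 !mul1r !mulr1.
Qed.

Lemma mulmx_woodbury (F : fieldType) m k (U : 'M[F]_(m, k)) (P : 'M[F]_(k, m)) :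
  1%:M + P *m U \in unitmx ->
  (1%:M + U *m P) *m (1%:M - U *m invmx (1%:M + P *m U) *m P) = 1%:M.
Proof.
move=> uD; have pushU : (1%:M + U *m P) *m U = U *m (1%:M + P *m U).
  by rewrite mulmxDl mulmxDr mul1mx mulmx1 mulmxA.
rewrite mulmxBr mulmx1 !mulmxA pushU -(mulmxA U) mulmxV // mulmx1.
by rewrite addrK.
Qed.

Lemma sum_set_by_card (T : finType) (V : nmodType) N (G : {set T} -> V) :
  (forall S : {set T}, (N < #|S|)%N -> G S = 0) ->
  \sum_(S : {set T}) G S =
  \sum_(0 <= i < (minn N #|T|).+1) \sum_(S : {set T} | #|S| == i) G S.
Proof.
move=> G0; have card_lt (S : {set T}) : (#|S| < #|T|.+1)%N by rewrite ltnS max_card.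
rewrite (partition_big (fun S => Ordinal (card_lt S)) xpredT) //=.
rewrite -(big_mkord xpredT (fun i => \sum_(S : {set T} | #|S| == i) G S)).
rewrite (big_cat_nat _ (n := (minn N #|T|).+1)) //=; last by rewrite ltnS geq_minr.
rewrite [X in _ + X]big_nat_cond [X in _ + X]big1 ?addr0 //.
move=> i /andP[/andP[gt_min_i lt_i_T1] _]; apply: big1 => S /eqP cardS.
apply: G0; rewrite cardS.
suff /negPf lt_T_iF : ~~ (#|T| < i)%N by rewrite gtn_min lt_T_iF orbF in gt_min_i.
by rewrite -leqNgt -ltnS.
Qed.

Section GramDeterminants.
Variables (F : fieldType) (n : nat).
Implicit Types (qs : seq 'rV[F]_n) (ws : seq 'cV[F]_n).

Definition gram m qs ws : 'M[F]_m := \matrix_(a, b) (qs`_a *m ws`_b) 0 0.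

Lemma wedge_eval_eq0 m qs ws : (n < m)%N -> wedge_eval m qs ws = 0.
Proof.
move=> lt_nm; apply/eqP/negPn/negP => nz_det.
pose Q : 'M[F]_(m, n) := \matrix_(a, t) qs`_a 0 t.
pose W : 'M[F]_(n, m) := \matrix_(t, b) ws`_b t 0.
have QW : gram m qs ws = Q *m W.
  by apply/matrixP => a b; rewrite !mxE; apply: eq_bigr => t _; rewrite !mxE.
have /eqP rk_QW : row_free (Q *m W) by rewrite row_free_unit unitmxE unitfE -QW.
have := leq_trans (mxrankM_maxl Q W) (rank_leq_col Q).
by rewrite rk_QW leqNgt lt_nm.
Qed.

Lemma det_gram_copid_cons xs ys q w qs' ws' N :
  size xs = size ys ->
  \det (gram (size xs + N).+1 (xs ++ q :: qs') (ys ++ w :: ws') + copid_mx (size xs))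
  = \det (gram (size xs + N) (xs ++ qs') (ys ++ ws') + copid_mx (size xs))
  + \det (gram (size xs + N).+1 (xs ++ q :: qs') (ys ++ w :: ws')
          + copid_mx (size xs).+1).
Proof.
move=> eq_size; set M := gram _ _ _ + copid_mx (size xs).+1.
have ltm : (size xs < (size xs + N).+1)%N by rewrite ltnS leq_addr.
pose i0 := Ordinal ltm.
have -> : gram (size xs + N).+1 (xs ++ q :: qs') (ys ++ w :: ws') + copid_mx (size xs)
          = M + delta_mx i0 i0.
  apply/matrixP => a b; rewrite !(copid_mxE, mxE) -addrA; congr (_ + _).
  case: (eqVneq a b) => [<-|neq_ab].
    rewrite !andbb -(inj_eq val_inj) /= [(_ <= _)%N]leq_eqVlt eq_sym.
    by case: ltngtP; rewrite ?addr0 ?add0r.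
  rewrite /= add0r; case: eqP => [ai0|]; case: eqP => [bi0|] //.
  by rewrite ai0 bi0 eqxx in neq_ab.
rewrite det_add_delta addrC /cofactor addnn -signr_odd odd_double mul1r.
congr (\det _ + _); apply/matrixP => a b; rewrite !(copid_mxE, mxE) /=.
rewrite nth_cat_bump [X in (ys ++ _)`_(bump X _)]eq_size nth_cat_bump.
rewrite (inj_eq (lift_inj (h:=i0))).
by rewrite leq_bump /unbump ltnSn subn1.
Qed.

Lemma det_gram_copid_subsets (T : finType) (q : T -> 'rV[F]_n) (w : T -> 'cV[F]_n)
    (r : seq T) xs ys :
  uniq r -> size xs = size ys ->
  \det (gram (size xs + size r) (xs ++ map q r) (ys ++ map w r) + copid_mx (size xs))
  = \sum_(S : {set T} | S \subset [set x in r])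
      let s := [seq x <- r | x \in S] in
      wedge_eval (size xs + size s) (xs ++ map q s) (ys ++ map w s).
Proof.
elim: r xs ys => [|x r IHr] xs ys /=.
  move=> _ _; rewrite (eq_bigl (pred1 set0)) => [|S]; last first.
    by rewrite subset0; apply/eqP/eqP => ->; apply/setP => x; rewrite inE.
  rewrite big_pred1_eq /= !cats0 addn0; congr (\det _); apply/matrixP => a b.
  by rewrite !(copid_mxE, mxE) leqNgt ltn_ord andbF addr0.
case/andP => xr ur eq_size; rewrite addnS det_gram_copid_cons //.
have -> : [set y in x :: r] = x |: [set y in r].
  by apply/setP => y; rewrite !inE.
rewrite big_subset_setU1 ?inE //; congr (_ + _).
  rewrite IHr //; apply: eq_bigr => S sSr.
  have xS : x \notin S by apply: contra xr => /(subsetP sSr); rewrite inE.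
  by rewrite (negPf xS).
rewrite -addSn -(size_rcons xs (q x)) -!cat_rcons IHr //; last first.
  by rewrite !size_rcons eq_size.
apply: eq_bigr => S _; rewrite setU11 /= -!cat_rcons size_rcons addSnnS.
suff -> : [seq y <- r | y \in x |: S] = [seq y <- r | y \in S] by [].
apply: eq_in_filter => y yr; rewrite in_setU1.
by case: eqP => // yx; rewrite -yx yr in xr.
Qed.

End GramDeterminants.

Lemma box_nil (F : fieldType) n : box ([::] : seq ('cV[F]_n * 'rV[F]_n)) = 1%:M.
Proof.
apply/matrixP => r c; rewrite !mxE /wedge_eval /= det_mx11 mxE /= mul_delta_mx_cond.
by case: eqP => _; rewrite ?mulr0n ?mulr1n ?mxE // !eqxx.
Qed.

Lemma box_eq0 (F : fieldType) n (s : seq ('cV[F]_n * 'rV[F]_n)) :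
  (n <= size s)%N -> box s = 0.
Proof. by move=> le_ns; apply/matrixP => r c; rewrite !mxE wedge_eval_eq0. Qed.

Section Boxes.
Variables (F : fieldType) (n k : nat) (u : 'I_k -> 'cV[F]_n) (p : 'I_k -> 'rV[F]_n).

Definition mx_of_cols : 'M[F]_(n, k) := \matrix_(r, j) u j r 0.
Definition mx_of_rows : 'M[F]_(k, n) := \matrix_(i, c) p i 0 c.
Local Notation U := mx_of_cols.
Local Notation P := mx_of_rows.

Lemma sum_tens : \sum_(i < k) tens (u i) (p i) = U *m P.
Proof.
apply/matrixP => r c; rewrite summxE !mxE; apply: eq_bigr => i _.
by rewrite /tens !mxE big_ord1.
Qed.

Lemma bordered_gramE (r c : 'I_n) :
  gram (1 + k) (delta_mx 0 r :: map p (enum 'I_k)) (delta_mx c 0 :: map u (enum 'I_k))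
    + copid_mx 1
  = block_mx (1%:M r c)%:M (row r U) (col c P) (1%:M + P *m U).
Proof.
have nthE (T : Type) x0 (f : 'I_k -> T) (l : 'I_k) : nth x0 (map f (enum 'I_k)) l = f l.
  by rewrite (nth_map l) ?size_enum_ord // nth_ord_enum.
apply/matrixP => i j; rewrite mxE [gram _ _ _ _ _]mxE copid_mxE.
case: (split_ordP i) => [i0 -> | i1 ->]; case: (split_ordP j) => [j0 -> | j1 ->].
- rewrite block_mxEul !ord1 /= addr0 mul_delta_mx_cond !mxE !eqxx mulr1n.
  by case: eqP; rewrite ?mulr1n ?mulr0n ?mxE.
- by rewrite block_mxEur !ord1 /= add0n nthE addr0 -rowE !mxE.
- by rewrite block_mxEdl !ord1 /= add0n nthE addr0 -colE !mxE.
rewrite block_mxEdr /= !add0n !nthE (inj_eq (@rshift_inj _ _)) addn_gt0 andbT !mxE.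
by rewrite addrC; congr (_ + _); apply: eq_bigr => t _; rewrite !mxE.
Qed.

Lemma sum_box_schur : 1%:M + P *m U \in unitmx ->
  \sum_(S : {set 'I_k}) box [seq (u j, p j) | j <- enum S]
  = \det (1%:M + P *m U) *: (1%:M - U *m invmx (1%:M + P *m U) *m P).
Proof.
move=> uD; apply/matrixP => r c; rewrite summxE !mxE.
have := det_gram_copid_subsets p u (xs := [:: delta_mx 0 r]) (ys := [:: delta_mx c 0])
  (enum_uniq 'I_k) erefl.
rewrite /= size_enum_ord bordered_gramE det_block_mx_schur // => expansion.
transitivity (\det ((1%:M r c)%:M - row r U *m invmx (1%:M + P *m U) *m col c P)
              * \det (1%:M + P *m U)); last first.
  rewrite det_mx11 mulrC !mxE -row_mul; congr (_ * (_ - _)).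
  by apply: eq_bigr => j _; rewrite !mxE.
rewrite expansion [RHS](eq_bigl xpredT) => [|S]; last first.
  by apply/subsetP => j; rewrite inE mem_enum.
apply: eq_bigr => S _; rewrite mxE /= size_map -!map_comp.
suff -> : enum S = [seq x <- enum 'I_k | x \in S] by [].
by rewrite enumT.
Qed.

End Boxes.

Lemma sum_box_by_card (F : fieldType) n k (u : 'I_k -> 'cV[F]_n) (p : 'I_k -> 'rV[F]_n) :
  \sum_(S : {set 'I_k}) box [seq (u j, p j) | j <- enum S]
  = 1%:M + \sum_(1 <= i < (minn (n - 1) k).+1)
             \sum_(S : {set 'I_k} | #|S| == i) box [seq (u j, p j) | j <- enum S].
Proof.
rewrite (sum_set_by_card (N := (n - 1)%N)) => [|S lt_S]; last first.
  by apply: box_eq0; rewrite size_map -cardE (leq_trans (leqSpred n)) // -subn1.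
rewrite card_ord big_ltn // (eq_bigl (pred1 set0)) => [|S]; last by rewrite /= cards_eq0.
by rewrite big_pred1_eq enum_set0 box_nil.
Qed.

Lemma SM_formula_field (F : fieldType) : SM_formula F.
Proof.
move=> n k B v p uB B' u A detA_neq0.
set U := mx_of_cols u; set P := mx_of_rows p.
have A_UP : A = 1%:M + U *m P by rewrite /A sum_tens.
have detD : \det (1%:M + P *m U) = \det A by rewrite A_UP det_sylvester.
have uD : 1%:M + P *m U \in unitmx by rewrite unitmxE unitfE detD.
have B'_BA : B' = B *m A.
  rewrite /B' /A mulmxDr mulmx1 mulmx_sumr; congr (_ + _); apply: eq_bigr => i _.
  by rewrite /tens /u !mulmxA mulmxV // mul1mx.
pose Ainv := 1%:M - U *m invmx (1%:M + P *m U) *m P.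
have A_Ainv : A *m Ainv = 1%:M by rewrite A_UP mulmx_woodbury.
have B'_inv : B' *m (Ainv *m invmx B) = 1%:M.
  by rewrite B'_BA -mulmxA (mulmxA A) A_Ainv mul1mx mulmxV.
have [uB' _] := mulmx1_unit B'_inv; split=> //.
have -> : invmx B' = Ainv *m invmx B.
  by rewrite -[RHS]mul1mx -(mulVmx uB') -mulmxA B'_inv mulmx1.
rewrite -scalerDr -[Y in _ *: (Y + _)]mul1mx -mulmxDl -sum_box_by_card.
rewrite sum_box_schur // detD.
by rewrite -scalemxAl scalerA mulVf // scale1r.
Qed.

Theorem mainTheorem2 (R : realType) : SM_formula R /\ SM_formula (complex R).
Proof. by split; apply: SM_formula_field. Qed.
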